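(* Consider the packet spreading algorithm described in the context with $N=2$ and $K_1\ge K_2$. Then $x_n^{K-1}=K_n$ for $n=1,2$; that is, the output pattern $P$ of length $K=K_1+K_2$ contains exactly $K_n$ occurrences of source $n$.
   Context: Packet spreading algorithm: Let $N\ge 2$, let $K_1,\dots,K_N$ be positive integers and $K=\sum_{n=1}^N K_n$. The algorithm runs iterations $k=0,1,\dots,K-1$ and maintains deficit counters $B_n^k$, $1\le n\le N$, with $B_n^0=0$ for all $n$. In iteration $k$, define the quantums $Q_n^k=\frac{(1-B_n^k)K}{K_n}$; select a source $m_k\in\arg\min_{1\le n\le N} Q_n^k$ (ties broken arbitrarily); let $Q=Q_{m_k}^k$; set $B_n^{k+1}=B_n^k+Q\frac{K_n}{K}$ for $n\neq m_k$ and $B_{m_k}^{k+1}=0$; and set the $k$-th entry of the output pattern to $P(k)=m_k$. For $0\le k\le K-1$, $x_n^k$ denotes the number of indices $k'\in\{0,\dots,k\}$ with $m_{k'}=n$, i.e. the number of source-$n$ instances inserted into the pattern after iteration $k$. *)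

From mathcomp Require Import all_boot all_order all_algebra.
Set Implicit Arguments. Unset Strict Implicit. Unset Printing Implicit Defensive.
Import Order.TTheory GRing.Theory Num.Theory.
Local Open Scope ring_scope.

(* Sources are indexed by 'I_N
   (ordinal i stands for source i+1 of the paper).  Ks n = K_n,
   m k = the source m_k selected in iteration k (a sequence of choices,
   ties being broken arbitrarily: any sequence of argmin choices is allowed). *)

Definition totK (N : nat) (Ks : 'I_N -> nat) : nat := (\sum_(n < N) Ks n)%N.

Definition quantum (R : realFieldType) (K Kn : nat) (b : R) : R :=
  (1 - b) * K%:R / Kn%:R.

Fixpoint deficit (R : realFieldType) (N : nat) (Ks : 'I_N -> nat)
    (m : nat -> 'I_N) (k : nat) : 'I_N -> R :=
  match k with
  | 0 => fun _ => 0
  | k'.+1 =>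
      let Bk := deficit R Ks m k' in
      let Q := quantum (totK Ks) (Ks (m k')) (Bk (m k')) in
      fun n => if n == m k' then 0
               else Bk n + Q * (Ks n)%:R / (totK Ks)%:R
  end.

Definition valid_run (R : realFieldType) (N : nat) (Ks : 'I_N -> nat)
    (m : nat -> 'I_N) : Prop :=
  forall k : nat, (k < totK Ks)%N -> forall n : 'I_N,
    quantum (totK Ks) (Ks (m k)) (deficit R Ks m k (m k))
      <= quantum (totK Ks) (Ks n) (deficit R Ks m k n).

Definition xcount (N : nat) (m : nat -> 'I_N) (n : 'I_N) (k : nat) : nat :=
  count (fun k' => m k' == n) (iota 0 k.+1).

(* Write t^k := (Q^0 + ... + Q^{k-1}) / K for the quantums chosen so far.  Every
   iteration raises B_n + x_n by Q K_n / K for every source n (for the selected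
   source the reset of B_n is exactly compensated by the new instance), so
   B_n + x_n = t K_n throughout.  Choosing a minimal quantum keeps every B_n in
   [0, 1], hence a source with x_n < K_n at the end forces t <= 1 and one with
   x_n > K_n forces t > 1; since the x_n add up to K = sum K_n, all x_n = K_n.
   The argument works for any number of sources. *)

From mathcomp Require Import all_boot all_order all_algebra.
From mathcomp Require Import ring lra.
Set Implicit Arguments. Unset Strict Implicit. Unset Printing Implicit Defensive.
Import Order.TTheory GRing.Theory Num.Theory.
Local Open Scope ring_scope.

Lemma eq_from_leq_sum (I : finType) (E1 E2 : I -> nat) :
    (forall i, E1 i <= E2 i)%N -> (\sum_i E1 i)%N = (\sum_i E2 i)%N ->
  forall i, E1 i = E2 i.
Proof.
move=> le12 /eqP; rewrite (leqif_sum (fun i _ => leqif_eq (le12 i))).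
by move/forall_inP => eq12 i; apply/eqP/eq12.
Qed.

Section PacketSpreading.
Variables (R : realFieldType) (N : nat) (Ks : 'I_N -> nat) (m : nat -> 'I_N).
Hypothesis Kpos : forall n, (0 < Ks n)%N.

Local Notation K := (totK Ks).
Local Notation B := (deficit R Ks m).
Local Notation Q k := (quantum K (Ks (m k)) (B k (m k))).

(* [served k n] is x_n^{k-1}: instances of n placed in iterations 0, ..., k-1. *)
Definition served (k : nat) (n : 'I_N) : nat := count (fun i => m i == n) (iota 0 k).

Definition level (k : nat) : R := \sum_(i < k) Q i / K%:R.

Lemma servedS k n : served k.+1 n = (served k n + (m k == n))%N.
Proof. by rewrite /served -[k.+1]addn1 iotaD count_cat /= addn0. Qed.

Lemma sum_served k : (\sum_(n < N) served k n)%N = k.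
Proof.
elim: k => [|k IHk]; first by rewrite big1.
rewrite (eq_bigr _ (fun n _ => servedS k n)) big_split /= IHk (bigD1 (m k)) //=.
by rewrite eqxx big1 ?addn0 ?addn1 // => n; rewrite eq_sym => /negPf ->.
Qed.

Lemma totK_gt0 (n : 'I_N) : (0 < K)%N.
Proof. by rewrite /totK (bigD1 n) //= ltn_addr ?Kpos. Qed.

Lemma deficit_add_served k n :
  B k n + (served k n)%:R = level k * (Ks n)%:R.
Proof.
have Kn0 : (Ks n)%:R != 0 :> R by rewrite pnatr_eq0 -lt0n Kpos.
have K0 : K%:R != 0 :> R by rewrite pnatr_eq0 -lt0n (totK_gt0 n).
elim: k => [|k IHk]; first by rewrite /level big_ord0 mul0r addr0.
rewrite servedS natrD /level big_ord_recr /= -/(level k) mulrDl -IHk.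
case: (eqVneq (m k) n) => [->|_]; last by rewrite mulr0n addr0; ring.
(* the selected source: resetting B_n to 0 loses exactly Q K_n / K = 1 - B_n *)
by rewrite mulr1n /quantum; field; apply/andP.
Qed.

Hypothesis hm : valid_run R Ks m.

Lemma deficit_bounds k n : (k <= K)%N -> 0 <= B k n <= 1.
Proof.
elim: k n => [|k IHk] n ltkK; first by rewrite /= lexx ler01.
rewrite /=; case: eqP => [_|_]; first by rewrite lexx ler01.
have /andP [Bn_ge0 _] := IHk n (ltnW ltkK).
have /andP [_ Bm_le1] := IHk (m k) (ltnW ltkK).
have Kn_gt0 : 0 < (Ks n)%:R :> R by rewrite ltr0n.
have K_gt0 : 0 < K%:R :> R by rewrite ltr0n (leq_trans _ ltkK).
have Q_ge0 : 0 <= Q k by rewrite /quantum divr_ge0 ?mulr_ge0 ?subr_ge0.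
(* minimality of Q^k against Q_n^k gives Q^k K_n / K <= 1 - B_n *)
have Q_le : Q k * (Ks n)%:R / K%:R <= 1 - B k n.
  by rewrite ler_pdivrMr // -ler_pdivlMr //; apply: hm.
apply/andP; split; last by lra.
by rewrite addr_ge0 // divr_ge0 ?(ltW K_gt0) // mulr_ge0 // ltW.
Qed.

Lemma served_le_of_level_le1 n : level K <= 1 -> (served K n <= Ks n)%N.
Proof.
move=> t_le1; have /andP [B_ge0 _] := deficit_bounds n (leqnn K).
have Kn_gt0 : 0 < (Ks n)%:R :> R by rewrite ltr0n.
have : level K * (Ks n)%:R <= (Ks n)%:R by rewrite ler_piMl // ltW.
by rewrite -(ler_nat R) -deficit_add_served; lra.
Qed.

Lemma served_ge_of_level_gt1 n : 1 < level K -> (Ks n <= served K n)%N.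
Proof.
move=> t_gt1; have /andP [_ B_le1] := deficit_bounds n (leqnn K).
have Kn_gt0 : 0 < (Ks n)%:R :> R by rewrite ltr0n.
have : (Ks n)%:R < level K * (Ks n)%:R by rewrite ltr_pMl.
by rewrite -ltnS -(ltr_nat R) -natr1 -deficit_add_served; lra.
Qed.

Lemma served_total n : served K n = Ks n.
Proof.
have [t_le1 | t_gt1] := lerP (level K) 1.
  exact: eq_from_leq_sum (fun i => served_le_of_level_le1 i t_le1) (sum_served K) n.
apply/esym/(eq_from_leq_sum (fun i => served_ge_of_level_gt1 i t_gt1)).
exact/esym/sum_served.
Qed.

End PacketSpreading.

Theorem mainTheorem3 (R : realFieldType) (Ks : 'I_2 -> nat)
    (Kpos : forall n, (0 < Ks n)%N)
    (K12 : (Ks (@Ordinal 2 1 is_true_true) <= Ks (@Ordinal 2 0 is_true_true))%N)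
    (m : nat -> 'I_2) (hm : valid_run R Ks m) :
  forall n : 'I_2, xcount m n (totK Ks).-1 = Ks n.
Proof.
move=> n; rewrite /xcount prednK ?(totK_gt0 Kpos n) //.
exact: (served_total Kpos hm).
Qed.
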